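(* For every $\delta\in\mathcal{D}^{LSL}$, Spearman's rho of the lower semilinear copula $S_\delta$ is $$\rho(S_\delta)=12\int_{[0,1]}\delta(x)\,x\,d\lambda(x)-3.$$
   Context: $\lambda$ is Lebesgue measure on $[0,1]$, $\lambda_2$ on $[0,1]^2$. Let $\mathcal{D}$ be the set of all functions $\delta:[0,1]\to[0,1]$ with $\delta(u)\le u$, $\delta(1)=1$, $\delta$ non-decreasing and 2-Lipschitz. Let $\mathcal{D}^{LSL}$ be the set of $\delta\in\mathcal{D}$ such that $x\mapsto\delta(x)/x$ is non-decreasing and $x\mapsto\delta(x)/x^2$ is non-increasing on $(0,1]$. For $\delta\in\mathcal{D}^{LSL}$, $S_\delta(x,y)=y\,\delta(x)/x$ if $y\le x$ and $x\,\delta(y)/y$ otherwise (convention $0/0:=0$); it is a copula. For a copula $C$, Spearman's rho is $\rho(C)=12\int_{[0,1]^2}C\,d\lambda_2-3$. *)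

From HB Require Import structures.
From mathcomp Require Import all_boot all_order all_algebra.
From mathcomp Require Import all_classical all_reals all_analysis.
Set Implicit Arguments. Unset Strict Implicit. Unset Printing Implicit Defensive.
Import Order.TTheory GRing.Theory Num.Theory.
Local Open Scope classical_set_scope.
Local Open Scope ring_scope.

Section Defs.
Variable R : realType.

(* The class D: delta : [0,1] -> [0,1] (represented as R -> R, only values on
   [0,1] matter), delta(u) <= u, delta(1) = 1, non-decreasing, 2-Lipschitz. *)
Definition in_D (delta : R -> R) : Prop :=
  (forall u, 0 <= u <= 1 -> 0 <= delta u <= 1) /\
  (forall u, 0 <= u <= 1 -> delta u <= u) /\
  delta 1 = 1 /\
  (forall u v, 0 <= u <= 1 -> 0 <= v <= 1 -> u <= v -> delta u <= delta v) /\
  (forall u v, 0 <= u <= 1 -> 0 <= v <= 1 -> `|delta u - delta v| <= 2 * `|u - v|).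

Definition in_DLSL (delta : R -> R) : Prop :=
  in_D delta /\
  (forall x y, 0 < x -> x <= y -> y <= 1 -> delta x / x <= delta y / y) /\
  (forall x y, 0 < x -> x <= y -> y <= 1 -> delta y / y ^+ 2 <= delta x / x ^+ 2).

(* Lower semilinear copula; MathComp division satisfies 0/0 = 0. *)
Definition S_delta (delta : R -> R) (x y : R) : R :=
  if y <= x then y * delta x / x else x * delta y / y.

Definition spearman_rho (C : R -> R -> R) : \bar R :=
  (12%:E * \int[(@lebesgue_measure R) \x (@lebesgue_measure R)]_(z in `[0%R, 1%R] `*` `[0%R, 1%R])
      (C z.1 z.2)%:E - 3%:E)%E.

End Defs.

From mathcomp Require Import all_boot all_order all_algebra.
From mathcomp Require Import all_classical all_reals all_analysis.
From mathcomp Require Import lra measurable_realfun.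
Import Order.TTheory GRing.Theory Num.Theory.
Import numFieldTopology.Exports.
Local Open Scope classical_set_scope.
Local Open Scope ring_scope.

(* On the unit square, S_delta (x, y) = min(x, y) * g (max(x, y)) with
   g t = delta t / t.  Cutting the square along the diagonal and integrating
   out the smaller coordinate first (Tonelli), each triangle contributes
   int_0^1 g x * x^2 / 2 dx, so the double integral is
   int_0^1 g x * x^2 dx = int_0^1 delta x * x dx.  The LSL condition makes g
   nondecreasing on [0, 1]; extended constantly outside [0, 1] it becomes
   nondecreasing on R, hence Borel measurable. *)

Section min_kernel.
Context {R : realType}.
Local Notation mu := (@lebesgue_measure R).

Lemma integral_itv0_id (x : R) : 0 <= x ->
  (\int[mu]_(y in `[0%R, x]) y%:E = (x ^+ 2 / 2)%:E)%E.
Proof.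
rewrite le_eqVlt => /orP[/eqP<-|x0].
  by rewrite set_itv1 integral_set1 expr0n /= mul0r.
have dF (y : R) : derivable (fun y : R => y ^+ 2 / 2) y 1.
  by apply: derivableM; [exact: exprn_derivable|exact: derivable_cst].
rewrite (@continuous_FTC2 _ (fun y : R => y) (fun y : R => y ^+ 2 / 2)) //.
- by rewrite expr0n /= mul0r sube0.
- by apply: continuous_in_subspaceT => y _; exact: cvg_id.
- split.
  + by move=> y _; exact: dF.
  + apply: cvg_at_right_filter; apply: cvgM; last exact: cvg_cst.
    exact: exprn_continuous.
  + apply: cvg_at_left_filter; apply: cvgM; last exact: cvg_cst.
    exact: exprn_continuous.
- move=> y _; rewrite derive1Mr//.
  by rewrite derive1E exp_derive /= expr1 -scalerA scaler1 -mulr_natl mulrC mulKf.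
Qed.

Variable g : R -> R.
Hypothesis g_ge0 : forall t, 0 <= g t.
Hypothesis mg : measurable_fun setT g.

Definition triangle_kernel (b : bool) (z : R * R) : R :=
  if (0 <= z.2) && (z.2 < z.1 ?<= if b) && (z.1 <= 1) then z.2 * g z.1 else 0.

Lemma triangle_kernel_ge0 b z : 0 <= triangle_kernel b z.
Proof.
rewrite /triangle_kernel; case: ifPn => // /andP[/andP[y0 _] _].
exact: mulr_ge0.
Qed.

Lemma measurable_triangle_kernel b : measurable_fun setT (triangle_kernel b).
Proof.
have m1 := @measurable_fst _ _ R R; have m2 := @measurable_snd _ _ R R.
apply: measurable_fun_ifT.
- apply: measurable_and; first apply: measurable_and.
  + by apply: measurable_fun_ler => //; exact: measurable_cst.
  + by case: b; [exact: measurable_fun_ler|exact: measurable_fun_ltr].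
  + by apply: measurable_fun_ler => //; exact: measurable_cst.
- by apply: measurable_funM => //; exact: measurableT_comp mg m1.
- exact: measurable_cst.
Qed.

Lemma integral_triangle_kernel_slice b x :
  (\int[mu]_y (triangle_kernel b (x, y))%:E =
   (if (0 <= x) && (x <= 1) then g x * (x ^+ 2 / 2) else 0)%:E)%E.
Proof.
rewrite /triangle_kernel /=; case: ifPn => [/andP[x0 x1]|x01]; last first.
  rewrite integral0_eq // => y _; case: ifPn => // /andP[/andP[y0 yx] x1].
  by case/negP: x01; rewrite x1 andbT (le_trans y0 (lteifW yx)).
have int_segment :
    (\int[mu]_(y in `[0%R, x]) (y * g x)%:E = (g x * (x ^+ 2 / 2))%:E)%E.
  under eq_integral do rewrite EFinM.
  rewrite ge0_integralZr ?lee_fin //; last first.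
    by move=> y; rewrite /= in_itv /= lee_fin => /andP[].
  by rewrite integral_itv0_id // -EFinM mulrC.
rewrite -int_segment; case: b.
  rewrite [RHS]integral_mkcond; apply: eq_integral => y _.
  by rewrite /patch mem_setE in_itv /= x1 andbT; case: ifPn.
rewrite -integral_itv_bndo_bndc; last first.
  by apply/measurable_EFinP; apply: measurable_funM => //; exact: measurable_cst.
rewrite [RHS]integral_mkcond; apply: eq_integral => y _.
by rewrite /patch mem_setE in_itv /= x1 andbT; case: ifPn.
Qed.

Lemma integral_triangle_kernel b :
  (\int[mu \x mu]_z (triangle_kernel b z)%:E =
   \int[mu]_(x in `[0%R, 1%R]) (g x * (x ^+ 2 / 2))%:E)%E.
Proof.
rewrite fubini_tonelli1 /fubini_F; last 2 first.
- by apply/measurable_EFinP; exact: measurable_triangle_kernel.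
- by move=> z; rewrite lee_fin triangle_kernel_ge0.
under eq_integral do rewrite integral_triangle_kernel_slice.
rewrite [RHS]integral_mkcond; apply: eq_integral => x _.
by rewrite /patch mem_setE in_itv /=; case: ifPn.
Qed.

Lemma integral_triangle_kernel_swap b :
  (\int[mu \x mu]_z (triangle_kernel b (z.2, z.1))%:E =
   \int[mu]_(x in `[0%R, 1%R]) (g x * (x ^+ 2 / 2))%:E)%E.
Proof.
rewrite fubini_tonelli2 /fubini_G; last 2 first.
- apply/measurable_EFinP; apply: (measurableT_comp (measurable_triangle_kernel b)).
  exact: measurable_swap.
- by move=> z; rewrite lee_fin triangle_kernel_ge0.
under eq_integral do rewrite integral_triangle_kernel_slice.
rewrite [RHS]integral_mkcond; apply: eq_integral => x _.
by rewrite /patch mem_setE in_itv /=; case: ifPn.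
Qed.

Definition min_kernel (z : R * R) : R :=
  if z.2 <= z.1 then z.2 * g z.1 else z.1 * g z.2.

Lemma min_kernel_restrict_square z :
  ((EFin \o min_kernel) \_ (`[0%R, 1%R] `*` `[0%R, 1%R])) z =
  ((triangle_kernel true z)%:E + (triangle_kernel false (z.2, z.1))%:E)%E.
Proof.
case: z => x y; rewrite /patch /min_kernel /triangle_kernel /=.
case: ifPn => [/set_mem[/=]|out].
  rewrite !in_itv /= => /andP[x0 x1] /andP[y0 y1].
  by rewrite x0 y0 x1 y1 !andbT; case: leP => yx; rewrite ?adde0 ?add0e.
have in_square (u v : R) : 0 <= v -> v <= u -> u <= 1 ->
    (u, v) \in `[0%R, 1%R] `*` `[0%R, 1%R] /\ (v, u) \in `[0%R, 1%R] `*` `[0%R, 1%R].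
  by move=> v0 vu u1; split; apply/mem_set; split; rewrite /= in_itv /=;
    apply/andP; split; lra.
rewrite !ifF ?adde0 //; apply: contraNF out.
  by move=> /andP[/andP[x0 /ltW xy] y1]; case: (in_square _ _ x0 xy y1).
by move=> /andP[/andP[y0 yx] x1]; case: (in_square _ _ y0 yx x1).
Qed.

Lemma integral_square_min_kernel :
  (\int[mu \x mu]_(z in `[0%R, 1%R] `*` `[0%R, 1%R]) (min_kernel z)%:E =
   \int[mu]_(x in `[0%R, 1%R]) (g x * x ^+ 2)%:E)%E.
Proof.
rewrite integral_mkcond; under eq_integral do rewrite min_kernel_restrict_square.
rewrite ge0_integralD //; last 4 first.
- by move=> z _; rewrite lee_fin triangle_kernel_ge0.
- by apply/measurable_EFinP; exact: measurable_triangle_kernel.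
- by move=> z _; rewrite lee_fin triangle_kernel_ge0.
- apply/measurable_EFinP; apply: (measurableT_comp (measurable_triangle_kernel false)).
  exact: measurable_swap.
have half_moment_ge0 x : x \in `[0%R, 1%R] -> (0 <= (g x * (x ^+ 2 / 2))%:E)%E.
  rewrite in_itv /= lee_fin => /andP[x0 _].
  by rewrite mulr_ge0 // mulr_ge0 // exprn_ge0.
have mhalf_moment :
    measurable_fun (`[0%R, 1%R] : set R) (fun x => (g x * (x ^+ 2 / 2))%:E).
  apply/measurable_EFinP/measurable_funM; first exact: measurable_funS mg.
  by apply: measurable_funM => //; exact: measurable_funX.
rewrite integral_triangle_kernel integral_triangle_kernel_swap -ge0_integralD //.
by apply: eq_integral => x _; rewrite -EFinD -mulrDr -splitr.
Qed.

End min_kernel.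

Section clamp01.
Context {R : realType}.

Definition clamp01 (t : R) : R := Num.min (Num.max t 0) 1.

Lemma clamp01_itv t : 0 <= clamp01 t <= 1.
Proof.
rewrite /clamp01; case: (leP t 0) => t0; rewrite ?max_r ?max_l //;
  case: (leP t 1) => t1; rewrite ?min_l ?min_r //=; lra.
Qed.

Lemma clamp01_id t : 0 <= t <= 1 -> clamp01 t = t.
Proof. by move=> /andP[t0 t1]; rewrite /clamp01 max_l // min_l. Qed.

Lemma clamp01_nd : {homo clamp01 : x y / x <= y}.
Proof. by move=> x y xy; apply: le_min2 => //; exact: le_max2. Qed.

Lemma nondecreasing_comp_clamp01 (f : R -> R) :
  {in `[0%R, 1%R] &, {homo f : x y / x <= y}} -> {homo f \o clamp01 : x y / x <= y}.
Proof.
move=> f_nd x y xy; apply: f_nd; rewrite ?in_itv ?clamp01_itv //.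
exact: clamp01_nd.
Qed.

End clamp01.

Section lower_semilinear.
Context {R : realType}.
Variable delta : R -> R.
Hypothesis delta_ge0 : forall u, 0 <= u <= 1 -> 0 <= delta u.
Hypothesis delta_div_nd :
  forall x y, 0 < x -> x <= y -> y <= 1 -> delta x / x <= delta y / y.

Lemma delta_div_ge0 t : 0 <= t <= 1 -> 0 <= delta t / t.
Proof. by move=> t01; rewrite divr_ge0 ?delta_ge0 //; case/andP: t01. Qed.

Lemma delta_div_nd_itv :
  {in `[0%R, 1%R] &, {homo (fun t => delta t / t) : x y / x <= y}}.
Proof.
move=> x y; rewrite !in_itv /= => /andP[x0 _] /andP[_ y1] xy.
move: x0 xy; rewrite le_eqVlt => /orP[/eqP<- y0|x0 xy]; last exact: delta_div_nd.
by rewrite invr0 mulr0 delta_div_ge0 // y0 y1.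
Qed.

Definition origin_slope : R -> R := (fun t => delta t / t) \o clamp01.

Lemma measurable_origin_slope : measurable_fun setT origin_slope.
Proof.
apply: nondecreasing_measurable => //.
exact/nondecreasing_comp_clamp01/delta_div_nd_itv.
Qed.

Lemma origin_slope_ge0 t : 0 <= origin_slope t.
Proof. exact/delta_div_ge0/clamp01_itv. Qed.

Lemma S_delta_min_kernel z : z \in `[0%R, 1%R] `*` `[0%R, 1%R] ->
  S_delta delta z.1 z.2 = min_kernel origin_slope z.
Proof.
case: z => x y /set_mem[/=]; rewrite !in_itv /= => x01 y01.
by rewrite /S_delta /min_kernel /origin_slope /= !clamp01_id // !mulrA.
Qed.

Lemma origin_slope_mul_sqr x : 0 <= x <= 1 -> origin_slope x * x ^+ 2 = delta x * x.
Proof.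
move=> x01; rewrite /origin_slope /= clamp01_id //.
have [->|x0] := eqVneq x 0; first by rewrite expr0n /= !mulr0.
by rewrite expr2 mulrA divfK.
Qed.

End lower_semilinear.

Theorem mainTheorem6 (R : realType) (delta : R -> R) :
  in_DLSL delta ->
  spearman_rho (S_delta delta) =
  (12%:E * \int[@lebesgue_measure R]_(x in `[0%R, 1%R]) (delta x * x)%:E - 3%:E)%E.
Proof.
move=> [[delta01 _] [delta_div_nd _]].
have delta_ge0 u : 0 <= u <= 1 -> 0 <= delta u by move=> /delta01/andP[].
rewrite /spearman_rho; congr (12%:E * _ - _)%E.
under eq_integral => z /S_delta_min_kernel -> do [].
rewrite integral_square_min_kernel; last 2 first.
- exact: origin_slope_ge0.
- exact: measurable_origin_slope.
apply: eq_integral => x; rewrite inE /= in_itv /= => x01.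
by rewrite origin_slope_mul_sqr.
Qed.
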